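(* Let $G\in\mathcal{D}_n$ and let $\varphi_1,\varphi_2$ be two $\mathbb{T}$-gains on $G$. Then $\sigma(A(\Phi_1))=\sigma(A(\Phi_2))$ if and only if $\Re(\varphi_1(C))=\Re(\varphi_2(C))$ for all cycles $C$ of $G$, where $\Phi_j=(G,\varphi_j)$.
   Context: Graphs are finite, simple and undirected. $\mathcal{D}_n$ is the collection of all connected graphs $G$ on $n$ vertices such that for each $k$ with $3\le k\le n$, $G$ has at most one cycle of length $k$. $\mathbb{T}=\{z\in\mathbb{C}:|z|=1\}$. A $\mathbb{T}$-gain on $G$ is a map $\varphi$ from oriented edges to $\mathbb{T}$ with $\varphi(\overrightarrow{e_{ts}})=\varphi(\overrightarrow{e_{st}})^{-1}$; $A(\Phi)$ for $\Phi=(G,\varphi)$ is the Hermitian matrix with $(s,t)$ entry $\varphi(\overrightarrow{e_{st}})$ if $v_s\sim v_t$, else $0$; $\sigma(\cdot)$ denotes the spectrum. The gain $\varphi(\overrightarrow{C})$ of a directed cycle is the product of the gains of its oriented edges; the two directions of a cycle $C$ give conjugate gains, and $\Re(\varphi(C))$ denotes their common real part. *)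

From HB Require Import structures.
From mathcomp Require Import all_boot all_order all_algebra.
Set Implicit Arguments. Unset Strict Implicit. Unset Printing Implicit Defensive.
Import Order.TTheory GRing.Theory Num.Theory.
Local Open Scope ring_scope.

Definition simple_graph n (e : rel 'I_n) : Prop :=
  irreflexive e /\ symmetric e.

Definition connected_graph n (e : rel 'I_n) : Prop :=
  forall x y : 'I_n, connect e x y.

Definition is_cycle n (e : rel 'I_n) (s : seq 'I_n) : bool :=
  [&& (3 <= size s)%N, uniq s & cycle e s].

(* The edge set of the cycle listed by s (an edge is a 2-subset of vertices);
   two listings describe the same cycle (subgraph) iff they have the same
   edge set. *)
Definition cycle_edges n (s : seq 'I_n) : {set {set 'I_n}} :=
  [set [set x; next s x] | x in s].

(* D_n : connected simple graphs on n vertices with at most one cycle of each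
   length k (3 <= k <= n). *)
Definition in_Dn n (e : rel 'I_n) : Prop :=
  [/\ simple_graph e, connected_graph e &
      forall s1 s2 : seq 'I_n, is_cycle e s1 -> is_cycle e s2 ->
        size s1 = size s2 -> cycle_edges s1 = cycle_edges s2].

(* A T-gain on G: phi i j is the gain of the oriented edge from v_i to v_j;
   unit modulus, and phi j i = (phi i j)^-1 on edges.  Values on non-edges
   are irrelevant. *)
Definition T_gain (C : numClosedFieldType) n (e : rel 'I_n)
    (phi : 'I_n -> 'I_n -> C) : Prop :=
  forall i j, e i j -> `|phi i j| = 1 /\ phi j i = (phi i j)^-1.

Definition gain_adj (C : numClosedFieldType) n (e : rel 'I_n)
    (phi : 'I_n -> 'I_n -> C) : 'M[C]_n :=
  \matrix_(i, j) (if e i j then phi i j else 0).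

Definition cycle_gain (C : numClosedFieldType) n
    (phi : 'I_n -> 'I_n -> C) (s : seq 'I_n) : C :=
  \prod_(x <- s) phi x (next s x).

(* Equality of spectra (as multisets of eigenvalues): every scalar has the
   same algebraic multiplicity as an eigenvalue of A and of B. *)
Definition same_spectrum (C : numClosedFieldType) n (A B : 'M[C]_n) : Prop :=
  forall x : C, mup x (char_poly A) = mup x (char_poly B).

(* Leibniz's formula writes char_poly A(Phi) as a sum over permutations s.
   Since A(Phi) has zero diagonal, the term of s is, up to sign, 'X to the
   number of fixed points of s times the product of the gains along the
   non-trivial orbits of s.  Such an orbit contributes 0 if it steps along a
   non-edge, 1 if it has length 2, and otherwise the gain of a cycle of G
   traversed in one of its two directions.

   Two distinct unimodular numbers with the same real part are inverse to each
   other.  Hence, if Re phi1(C) = Re phi2(C) for every cycle C shorter than k,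
   reversing in each permutation the orbits on which the two gains differ is
   an involution that carries the phi1-term of s to the phi2-term of s,
   whenever all orbits of s are shorter than k.  With k > n this gives the
   "if" direction.

   Conversely, argue by induction on the length k of a cycle C.  Equal
   characteristic polynomials then also agree on the sum over the
   permutations with an orbit of length >= k.  In its coefficient of
   'X^(n - k) only the permutations moving exactly k points along edges
   survive, and as G has a single cycle of length k these are the two
   orientations of C, contributing +-(phi(C) + phi(C)^-1) = +-2 Re phi(C). *)

From HB Require Import structures.
From mathcomp Require Import all_boot all_order all_algebra.
From mathcomp Require Import fingroup perm ring.
Import Order.TTheory GRing.Theory Num.Theory.
Set Implicit Arguments. Unset Strict Implicit. Unset Printing Implicit Defensive.
Local Open Scope ring_scope.

Section PermOrbits.
Variable T : finType.
Implicit Types (s p : {perm T}) (x y : T) (S : {set T}).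

Lemma porbit_perm1 s x : porbit s (s x) = porbit s x.
Proof. by have := porbit_perm s 1 x; rewrite expg1. Qed.

Lemma mem_porbit_perm s x y : (s y \in porbit s x) = (y \in porbit s x).
Proof. by rewrite -!eq_porbit_mem porbit_perm1. Qed.

Lemma mem_porbit_permV s x y : ((s^-1)%g y \in porbit s x) = (y \in porbit s x).
Proof. by rewrite -{2}(permKV s y) mem_porbit_perm. Qed.

Lemma porbit_subset s x S :
  x \in S -> {homo s : y / y \in S} -> porbit s x \subset S.
Proof.
move=> xS sS; apply/subsetP => _ /porbitP [i ->].
by elim: i => [|i IHi]; rewrite ?expg0 ?perm1 // expgSr permM sS.
Qed.

Lemma eq_porbit_in s p x : {in porbit p x, s =1 p} -> porbit s x = porbit p x.
Proof.
move=> eq_sp; have iter_sp i : (s ^+ i)%g x = (p ^+ i)%g x.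
  by elim: i => [|i IHi]; rewrite ?expg0 // !expgSr !permM IHi eq_sp ?mem_porbit.
by apply/setP => y; apply/porbitP/porbitP => -[i ->]; exists i.
Qed.

Lemma card_porbit1 s x : (#|porbit s x| == 1%N) = (s x == x).
Proof.
apply/cards1P/eqP => [[z Ez] | sx].
  have := porbit_id s x; rewrite -(mem_porbit_perm s) Ez.
  by have := porbit_id s x; rewrite Ez => /set1P -> /set1P.
exists x; apply/eqP; rewrite eqEsubset sub1set porbit_id andbT.
by apply: porbit_subset; rewrite ?inE // => y /set1P ->; rewrite sx inE.
Qed.

Lemma porbit_moved s x y :
  #|porbit s x| != 1%N -> y \in porbit s x -> s y != y.
Proof. by rewrite -eq_porbit_mem -card_porbit1 => + /eqP ->. Qed.

Lemma card_porbit_invol s x : s (s x) = x -> (#|porbit s x| <= 2)%N.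
Proof.
move=> ssx; apply: leq_trans (_ : #|[set x; s x]| <= 2)%N; last first.
  by rewrite cards2; case: (x != s x).
rewrite subset_leq_card // porbit_subset ?set21 //.
by move=> y /set2P [] ->; rewrite ?ssx !inE eqxx ?orbT.
Qed.

Definition moved s := [set x | s x != x].

Lemma mem_moved_perm s x : (s x \in moved s) = (x \in moved s).
Proof. by rewrite !inE (inj_eq perm_inj). Qed.

Lemma movedV s : moved s^-1 = moved s.
Proof. by apply/setP => x; rewrite !inE (canF_eq (permK s)) eq_sym. Qed.

Lemma moved_porbit s x : (x \in moved s) = (#|porbit s x| != 1%N).
Proof. by rewrite inE card_porbit1. Qed.

Definition small_porbits k s := [forall x, #|porbit s x| < k]%N.

Lemma big_moved_porbits (R : Type) (idx : R) (op : Monoid.com_law idx) s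
    (F : T -> R) :
  \big[op/idx]_(i in moved s) F i =
  \big[op/idx]_(O in porbit s @: moved s) \big[op/idx]_(i in O) F i.
Proof.
rewrite (partition_big_imset (porbit s)); apply: eq_bigr => _ /imsetP [x + ->].
rewrite moved_porbit => nfix_x; apply: eq_bigl => y; rewrite eq_porbit_mem.
by apply: andb_idl => /(porbit_moved nfix_x); rewrite inE.
Qed.

Section ReversePorbits.
Variables (s : {perm T}) (r : pred {set T}).

Definition reverse_porbits_fun x := if r (porbit s x) then (s^-1)%g x else s x.

Lemma porbit_reverse_porbits_fun x : porbit s (reverse_porbits_fun x) = porbit s x.
Proof.
by apply/eqP; rewrite eq_porbit_mem /reverse_porbits_fun;
  case: ifP; rewrite ?mem_porbit_permV ?mem_porbit_perm porbit_id.
Qed.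

Lemma reverse_porbits_inj : injective reverse_porbits_fun.
Proof.
move=> x y eq_xy; have := porbit_reverse_porbits_fun x.
rewrite eq_xy porbit_reverse_porbits_fun => eq_Oxy.
by move: eq_xy; rewrite /reverse_porbits_fun eq_Oxy; case: ifP => _; apply: perm_inj.
Qed.

Definition reverse_porbits := perm reverse_porbits_inj.

Lemma reverse_porbitsE x :
  reverse_porbits x = if r (porbit s x) then (s^-1)%g x else s x.
Proof. by rewrite permE. Qed.

Lemma reverse_porbits_on x y : y \in porbit s x ->
  reverse_porbits y = if r (porbit s x) then (s^-1)%g y else s y.
Proof. by rewrite -eq_porbit_mem reverse_porbitsE => /eqP ->. Qed.

Lemma porbit_reverse_porbits x : porbit reverse_porbits x = porbit s x.
Proof.
case rO: (r (porbit s x)).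
  rewrite -(porbitV s); apply: eq_porbit_in => y.
  by rewrite porbitV => /reverse_porbits_on ->; rewrite rO.
by apply: eq_porbit_in => y /reverse_porbits_on ->; rewrite rO.
Qed.

Lemma odd_reverse_porbits : odd_perm reverse_porbits = odd_perm s.
Proof.
by rewrite /odd_perm /porbits (eq_imset _ porbit_reverse_porbits).
Qed.

Lemma moved_reverse_porbits : moved reverse_porbits = moved s.
Proof. by apply/setP => x; rewrite !moved_porbit porbit_reverse_porbits. Qed.

End ReversePorbits.

Lemma reverse_porbitsK s r r' :
  (forall x, r' (porbit s x) = r (porbit s x)) ->
  reverse_porbits (reverse_porbits s r) r' = s.
Proof.
move=> eq_r; apply/permP => x.
rewrite reverse_porbitsE porbit_reverse_porbits eq_r.
case rO: (r (porbit s x)); last by rewrite reverse_porbitsE rO.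
by apply: (@perm_inj _ (reverse_porbits s r)); rewrite permKV reverse_porbitsE
  porbit_perm1 rO permK.
Qed.

Lemma porbit_orient s p x :
    {in porbit p x, forall y, s y = p y \/ s y = (p^-1)%g y} ->
    {in porbit p x, forall y, s (s y) != y} ->
    {in [predC porbit p x], s =1 p} ->
  s x = p x -> s = p.
Proof.
move=> sp ss_neq s_out sx; apply/permP => y.
case: (boolP (y \in porbit p x)) => [/porbitP [i ->] | ]; last exact: s_out.
elim: i => [|i IHi]; first by rewrite perm1.
have y_in : (p ^+ i)%g x \in porbit p x by rewrite mem_porbit.
rewrite expgSr permM; case: (sp (p ((p ^+ i)%g x))); rewrite ?mem_porbit_perm //.
rewrite permK => s_back.
by have := ss_neq _ y_in; rewrite IHi s_back eqxx.
Qed.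

Definition orbit_seq s x := traject s x #|porbit s x|.

Lemma uniq_orbit_seq s x : uniq (orbit_seq s x).
Proof. exact: uniq_traject_porbit. Qed.

Lemma mem_orbit_seq s x : orbit_seq s x =i porbit s x.
Proof. by move=> y; rewrite porbit_traject. Qed.

Lemma size_orbit_seq s x : size (orbit_seq s x) = #|porbit s x|.
Proof. exact: size_traject. Qed.

Lemma next_orbit_seq s x : {in porbit s x, next (orbit_seq s x) =1 s}.
Proof.
have cycle_s : fcycle s (orbit_seq s x).
  rewrite /orbit_seq; have := iter_porbit s x.
  case: #|_| (card_porbit_neq0 s x) => // m _ iter_x /=.
  by rewrite -[X in rcons _ X]iter_x iterSr -trajectSr fpath_traject.
by move=> y; rewrite -mem_orbit_seq; apply: nextE.
Qed.

Section CyclePerm.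
Variables (t : seq T) (t_uniq : uniq t).

Definition cycle_perm := perm (can_inj (prev_next t_uniq)).

Lemma cycle_permE y : cycle_perm y = next t y.
Proof. by rewrite permE. Qed.

Lemma cycle_permV y : (cycle_perm^-1)%g y = prev t y.
Proof. by apply: (@perm_inj _ cycle_perm); rewrite permKV cycle_permE next_prev. Qed.

Lemma porbit_cycle_perm x : x \in t -> porbit cycle_perm x =i t.
Proof.
move=> xt y; apply/idP/idP => [|yt].
  have /subsetP sub_t : porbit cycle_perm x \subset [set z in t].
    by rewrite porbit_subset ?inE // => z; rewrite !inE cycle_permE mem_next.
  by move/sub_t; rewrite inE.
have := fconnect_cycle (cycle_next t_uniq) xt y; rewrite yt => /iter_findex <-.
by rewrite -(eq_iter cycle_permE) -permX mem_porbit.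
Qed.

Lemma card_porbit_cycle_perm x : x \in t -> #|porbit cycle_perm x| = size t.
Proof. by move/porbit_cycle_perm/eq_card ->; apply/card_uniqP. Qed.

Lemma moved_cycle_perm : (1 < size t)%N -> moved cycle_perm = [set x in t].
Proof.
move=> t_gt1; apply/setP => x; rewrite moved_porbit inE.
case: (boolP (x \in t)) => [xt | xNt]; first by rewrite card_porbit_cycle_perm // gtn_eqF.
by rewrite card_porbit1 cycle_permE next_nth (negbTE xNt) eqxx.
Qed.

End CyclePerm.

End PermOrbits.

Lemma eq_add_invf (F : fieldType) (a b : F) : a != 0 -> b != 0 ->
  a + a^-1 = b + b^-1 -> b = a \/ b = a^-1.
Proof.
move=> a_neq0 b_neq0 eq_ab.
have : (b - a) * (b - a^-1) == 0.
  apply/eqP; transitivity (b * (b + b^-1 - (a + a^-1))).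
    by field; rewrite a_neq0 b_neq0.
  by rewrite eq_ab subrr mulr0.
by rewrite mulf_eq0 !subr_eq0 => /orP [] /eqP; [left | right].
Qed.

Lemma eq_monic_mup (F : closedFieldType) (p q : {poly F}) :
  p \is monic -> q \is monic -> (forall x, mup x p = mup x q) -> p = q.
Proof.
move=> p_monic q_monic eq_mup.
have [rp p_eq] := closed_field_poly_normal p.
have [rq q_eq] := closed_field_poly_normal q.
rewrite (monicP p_monic) scale1r in p_eq; rewrite (monicP q_monic) scale1r in q_eq.
rewrite p_eq q_eq; apply: perm_big; apply/allP => x _ /=.
by rewrite -!mu_prod_XsubC -p_eq -q_eq eq_mup.
Qed.

Lemma Re_norm1 (C : numClosedFieldType) (z : C) :
  `|z| = 1 -> 'Re z = (z + z^-1) / 2%:R.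
Proof. by move=> z_norm1; rewrite ReE (invC_norm z) z_norm1 expr1n invr1 mul1r. Qed.

Section CharPolyExpansion.
Variables (R : comNzRingType) (n : nat).
Implicit Types (A : 'M[R]_n) (s : 'S_n).

Definition perm_gain A s (S : {set 'I_n}) := \prod_(i in S) A i (s i).

Definition perm_weight A s : R :=
  (-1) ^+ s * (-1) ^+ #|moved s| * perm_gain A s (moved s).

Lemma char_poly_perm_expansion A : (forall i, A i i = 0) ->
  char_poly A = \sum_s perm_weight A s *: 'X^#|~: moved s|.
Proof.
move=> A_diag0; apply: eq_bigr => s _.
have char_mxE i j : char_poly_mx A i j = if i == j then 'X else - (A i j)%:P.
  by rewrite !mxE; case: eqP => [->|_]; rewrite ?A_diag0 ?subr0 ?sub0r.
rewrite (bigID (mem (moved s))) /=.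
have -> : \prod_(i | i \notin moved s) char_poly_mx A i (s i) = 'X^#|~: moved s|.
  rewrite -prodr_const; apply: eq_big => [i | i]; first by rewrite !inE.
  by rewrite inE negbK => /eqP ->; rewrite char_mxE eqxx.
have -> : \prod_(i in moved s) char_poly_mx A i (s i) =
          ((-1) ^+ #|moved s| * \prod_(i in moved s) A i (s i))%:P.
  rewrite polyCM polyC_exp polyCN rmorph_prod -prodrN; apply: eq_bigr => i.
  by rewrite inE char_mxE eq_sym => /negbTE ->.
by rewrite /perm_weight mul_polyC -!scalerA scaler_sign mulr_sign.
Qed.

End CharPolyExpansion.

Section GainGraph.
Variables (C : numClosedFieldType) (n : nat) (e : rel 'I_n).
Hypotheses (e_irr : irreflexive e) (e_sym : symmetric e).
Implicit Types (phi : 'I_n -> 'I_n -> C) (s : 'S_n) (S : {set 'I_n}).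

Local Notation A := (gain_adj e).

Lemma gain_adjE phi i j : A phi i j = if e i j then phi i j else 0.
Proof. by rewrite mxE. Qed.

Lemma gain_adj_diag phi i : A phi i i = 0.
Proof. by rewrite gain_adjE e_irr. Qed.

Lemma gain_adjV phi i j : T_gain e phi -> A phi j i = (A phi i j)^-1.
Proof.
move=> gain_phi; rewrite !gain_adjE e_sym.
by case: ifP => [/gain_phi [] | _]; rewrite ?invr0.
Qed.

Lemma perm_gainV phi s S : T_gain e phi -> (forall i, (s i \in S) = (i \in S)) ->
  perm_gain (A phi) s^-1 S = (perm_gain (A phi) s S)^-1.
Proof.
move=> gain_phi S_stable; rewrite /perm_gain -prodfV (reindex_inj (@perm_inj _ s)).
by apply: eq_big => [i | i _]; rewrite ?S_stable // permK (gain_adjV _ _ gain_phi).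
Qed.

Lemma perm_gain_eq0 phi s S i :
  i \in S -> ~~ e i (s i) -> perm_gain (A phi) s S = 0.
Proof.
by move=> iS nei; rewrite /perm_gain (bigD1 i) //= gain_adjE (negbTE nei) mul0r.
Qed.

Lemma norm_perm_gain phi s S : T_gain e phi -> {in S, forall i, e i (s i)} ->
  `|perm_gain (A phi) s S| = 1.
Proof.
move=> gain_phi e_S; rewrite normr_prod big1 // => i /e_S ei.
by rewrite gain_adjE ei; case: (gain_phi _ _ ei).
Qed.

Lemma perm_gain_porbit2 phi s x : T_gain e phi ->
  #|porbit s x| = 2 -> e x (s x) -> perm_gain (A phi) s (porbit s x) = 1.
Proof.
move=> gain_phi card2 ex.
have ssx : s (s x) = x by have := iter_porbit s x; rewrite card2.
have sx_neq : s x != x by rewrite -card_porbit1 card2.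
have -> : porbit s x = [set x; s x].
  apply/eqP; rewrite eq_sym eqEcard cards2 eq_sym sx_neq card2 andbT.
  by rewrite subUset !sub1set porbit_id mem_porbit_perm porbit_id.
rewrite /perm_gain big_setU1 ?inE 1?eq_sym //= big_set1 ssx (gain_adjV _ _ gain_phi).
have esx : e (s x) x by rewrite e_sym.
rewrite mulVf // gain_adjE esx -normr_eq0.
by case: (gain_phi _ _ esx) => -> _; rewrite oner_eq0.
Qed.

Lemma cycle_gain_perm phi (u : seq 'I_n) s : uniq u ->
  {in u, next u =1 s} -> {in u, forall y, e y (s y)} ->
  cycle_gain phi u = perm_gain (A phi) s [set y in u].
Proof.
move=> u_uniq next_u e_u; rewrite /cycle_gain /perm_gain big_uniq //.
by apply: eq_big => [y | y]; rewrite ?inE // => yu; rewrite gain_adjE next_u ?e_u.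
Qed.

Lemma is_cycle_orbit_seq s x : (3 <= #|porbit s x|)%N ->
  {in porbit s x, forall y, e y (s y)} -> is_cycle e (orbit_seq s x).
Proof.
move=> O_ge3 e_O; rewrite /is_cycle size_orbit_seq O_ge3 uniq_orbit_seq.
apply: cycle_from_next (uniq_orbit_seq s x) _ => y.
by rewrite mem_orbit_seq => yO; rewrite next_orbit_seq ?e_O.
Qed.

Lemma cycle_gain_orbit_seq phi s x : {in porbit s x, forall y, e y (s y)} ->
  cycle_gain phi (orbit_seq s x) = perm_gain (A phi) s (porbit s x).
Proof.
move=> e_O; have eq_O : [set y in orbit_seq s x] = porbit s x.
  by apply/setP => y; rewrite inE mem_orbit_seq.
rewrite (@cycle_gain_perm _ _ s (uniq_orbit_seq s x)) ?eq_O // => y;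
  rewrite mem_orbit_seq => yO; [exact: next_orbit_seq | exact: e_O].
Qed.

Lemma norm_cycle_gain phi u : T_gain e phi -> path.cycle e u ->
  `|cycle_gain phi u| = 1.
Proof.
move=> gain_phi u_path; rewrite normr_prod big_seq big1 // => y yu.
by case: (gain_phi _ _ (next_cycle u_path yu)).
Qed.

End GainGraph.

Section GainReversal.
Variables (C : numClosedFieldType) (n : nat) (e : rel 'I_n).
Hypotheses (e_irr : irreflexive e) (e_sym : symmetric e).
Variables (phi1 phi2 : 'I_n -> 'I_n -> C).
Hypotheses (gain_phi1 : T_gain e phi1) (gain_phi2 : T_gain e phi2).
Local Notation A := (gain_adj e).
Implicit Types (phi : 'I_n -> 'I_n -> C) (s : 'S_n) (x : 'I_n).

Local Notation mismatch s O := (perm_gain (A phi1) s O != perm_gain (A phi2) s O).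

Definition gain_reversal s := reverse_porbits s (fun O => mismatch s O).

Lemma perm_gain_reversal phi s x : T_gain e phi ->
  perm_gain (A phi) (gain_reversal s) (porbit s x) =
  if mismatch s (porbit s x) then (perm_gain (A phi) s (porbit s x))^-1
  else perm_gain (A phi) s (porbit s x).
Proof.
move=> gain_phi; rewrite -perm_gainV //; last exact: mem_porbit_perm.
by case: ifP => mis; apply: eq_bigr => y /reverse_porbits_on ->; rewrite mis.
Qed.

Lemma gain_reversalK : involutive gain_reversal.
Proof.
move=> s; apply: reverse_porbitsK => x.
by rewrite !perm_gain_reversal //; case: ifP; rewrite ?(inj_eq invr_inj).
Qed.

Lemma small_porbits_reversal k s :
  small_porbits k (gain_reversal s) = small_porbits k s.
Proof. by apply: eq_forallb => x; rewrite porbit_reverse_porbits. Qed.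

Variable k : nat.
Hypothesis short_cycles_Re : forall t, is_cycle e t -> (size t < k)%N ->
  'Re (cycle_gain phi1 t) = 'Re (cycle_gain phi2 t).

Lemma perm_gain_reversal_porbit s x :
  (#|porbit s x| < k)%N -> #|porbit s x| != 1%N ->
  perm_gain (A phi1) (gain_reversal s) (porbit s x) =
  perm_gain (A phi2) s (porbit s x).
Proof.
move=> O_lt_k O_neq1; rewrite perm_gain_reversal //.
case: ifPn => [mis | /negbNE /eqP //]; apply/esym.
have [e_O | ] := boolP [forall y in porbit s x, e y (s y)]; last first.
  rewrite negb_forall_in => /existsP [y /andP [yO ney]].
  by move: mis; rewrite !(perm_gain_eq0 _ yO ney) eqxx.
move/forall_inP: e_O => e_O.
have [O_le2 | O_gt2] := leqP #|porbit s x| 2.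
  have O_eq2 : #|porbit s x| = 2.
    by apply/eqP; rewrite eqn_leq O_le2 ltn_neqAle eq_sym O_neq1 lt0n card_porbit_neq0.
  by move: mis; rewrite !perm_gain_porbit2 ?eqxx ?e_O ?porbit_id.
have g_norm1 phi : T_gain e phi -> `|perm_gain (A phi) s (porbit s x)| = 1.
  by move=> gain_phi; apply: norm_perm_gain.
have g_neq0 phi : T_gain e phi -> perm_gain (A phi) s (porbit s x) != 0.
  by move=> gain_phi; rewrite -normr_eq0 g_norm1 ?oner_eq0.
have := short_cycles_Re (is_cycle_orbit_seq O_gt2 e_O).
rewrite size_orbit_seq !(cycle_gain_orbit_seq _ e_O) !Re_norm1 ?g_norm1 //.
move=> /(_ O_lt_k) /mulIf; rewrite invr_eq0 pnatr_eq0 => /(_ isT) eq_sum.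
have [eq_g | //] := eq_add_invf (g_neq0 _ gain_phi1) (g_neq0 _ gain_phi2) eq_sum.
by rewrite eq_g eqxx in mis.
Qed.

Lemma perm_weight_reversal s : small_porbits k s ->
  perm_weight (A phi1) (gain_reversal s) = perm_weight (A phi2) s.
Proof.
move=> /forallP small_s; rewrite /perm_weight odd_reverse_porbits moved_reverse_porbits.
congr (_ * _); rewrite /perm_gain !big_moved_porbits.
apply: eq_bigr => _ /imsetP [x + ->]; rewrite moved_porbit => O_neq1.
exact: perm_gain_reversal_porbit.
Qed.

Lemma eq_sum_small_perm_weight :
  \sum_(s | small_porbits k s) perm_weight (A phi1) s *: 'X^#|~: moved s| =
  \sum_(s | small_porbits k s) perm_weight (A phi2) s *: 'X^#|~: moved s|.
Proof.
rewrite (reindex_inj (can_inj gain_reversalK)) /=.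
apply: eq_big => [s | s]; rewrite small_porbits_reversal // => small_s.
by rewrite moved_reverse_porbits perm_weight_reversal.
Qed.

Lemma eq_sum_long_perm_weight : char_poly (A phi1) = char_poly (A phi2) ->
  \sum_(s | ~~ small_porbits k s) perm_weight (A phi1) s *: 'X^#|~: moved s| =
  \sum_(s | ~~ small_porbits k s) perm_weight (A phi2) s *: 'X^#|~: moved s|.
Proof.
rewrite !char_poly_perm_expansion; try exact: gain_adj_diag.
by rewrite !(bigID (small_porbits k) predT) /= eq_sum_small_perm_weight => /addrI.
Qed.

End GainReversal.

Lemma mem_cycle_edges n (t : seq 'I_n) y z : uniq t -> y != z ->
  [set y; z] \in cycle_edges t -> y \in t /\ (z = next t y \/ z = prev t y).
Proof.
move=> t_uniq yz /imsetP [w wt E].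
have : y \in [set w; next t w] by rewrite -E set21.
have : z \in [set w; next t w] by rewrite -E set22.
rewrite !inE => /orP [] /eqP z_eq /orP [] /eqP y_eq;
  move: yz; rewrite y_eq z_eq ?eqxx // => _.
- by rewrite mem_next (prev_next t_uniq); split; last right.
- by split; last left.
Qed.

Lemma cycle_edges_orbit_seq n (s : 'S_n) x :
  cycle_edges (orbit_seq s x) = [set [set y; s y] | y in porbit s x].
Proof.
apply/setP => E; apply/imsetP/imsetP => -[y yO ->]; exists y.
- by rewrite -mem_orbit_seq.
- by rewrite next_orbit_seq // -mem_orbit_seq.
- by rewrite mem_orbit_seq.
- by rewrite next_orbit_seq.
Qed.

Section LongCycle.
Variables (C : numClosedFieldType) (n : nat) (e : rel 'I_n).
Hypotheses (e_irr : irreflexive e) (e_sym : symmetric e).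
Hypothesis eq_cycle_edges : forall s1 s2 : seq 'I_n,
  is_cycle e s1 -> is_cycle e s2 -> size s1 = size s2 -> cycle_edges s1 = cycle_edges s2.
Variable t : seq 'I_n.
Hypothesis t_cycle : is_cycle e t.
Local Notation A := (gain_adj e).
Implicit Types (phi : 'I_n -> 'I_n -> C) (s : 'S_n).

Let t_uniq : uniq t. Proof. by case/and3P: t_cycle. Qed.
Let t_size : (3 <= size t)%N. Proof. by case/and3P: t_cycle. Qed.
Let t_path : path.cycle e t. Proof. by case/and3P: t_cycle. Qed.
Let rho := cycle_perm t_uniq.

Let t_nonempty : exists x, x \in t.
Proof. by case: (t) t_size => // y u _; exists y; rewrite mem_head. Qed.

Lemma cycle_perm_orientations s :
    {in t, forall y, s y = rho y \/ s y = (rho^-1)%g y} ->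
    {in t, forall y, s (s y) != y} -> {in [predC t], forall y, s y = y} ->
  s = rho \/ s = (rho^-1)%g.
Proof.
move=> steps ss_neq s_out; have [x xt] := t_nonempty.
have rho_t : porbit rho x =i t := porbit_cycle_perm t_uniq xt.
have rho_out y : y \notin t -> rho y = y.
  by move=> yNt; rewrite cycle_permE next_nth (negbTE yNt).
case: (steps x xt) => sx; [left | right]; apply: porbit_orient sx => y.
- by rewrite rho_t => /steps.
- by rewrite rho_t => /ss_neq.
- by rewrite inE rho_t => yNt; rewrite s_out ?rho_out.
- by rewrite porbitV rho_t => /steps; rewrite invgK => -[] ->; [right | left].
- by rewrite porbitV rho_t => /ss_neq.
- rewrite inE porbitV rho_t => yNt; rewrite s_out //.
  by apply: (@perm_inj _ rho); rewrite permKV rho_out.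
Qed.

Lemma long_perm_cases s : ~~ small_porbits (size t) s -> #|moved s| = size t ->
  {in moved s, forall i, e i (s i)} -> s = rho \/ s = (rho^-1)%g.
Proof.
rewrite negb_forall => /existsP [x]; rewrite -leqNgt => O_ge moved_card e_moved.
set O := porbit s x.
have O_neq1 : #|O| != 1%N by rewrite gtn_eqF // (leq_trans _ O_ge) // ltnW.
have O_moved : O = moved s.
  apply/eqP; rewrite eqEcard moved_card O_ge andbT.
  by apply/subsetP => y /(porbit_moved O_neq1); rewrite inE.
have O_card : #|O| = size t by rewrite O_moved.
have e_O : {in O, forall y, e y (s y)} by rewrite O_moved.
have O_edges : cycle_edges (orbit_seq s x) = cycle_edges t.
  by apply: eq_cycle_edges; rewrite ?is_cycle_orbit_seq ?size_orbit_seq ?O_card.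
have s_steps y : y \in O -> y \in t /\ (s y = rho y \/ s y = (rho^-1)%g y).
  move=> yO; rewrite cycle_permE cycle_permV; apply: mem_cycle_edges => //.
    by rewrite eq_sym (porbit_moved O_neq1).
  by rewrite -O_edges cycle_edges_orbit_seq; apply/imsetP; exists y.
have O_t : O =i t.
  apply/subset_cardP; first by rewrite O_card (card_uniqP t_uniq).
  by apply/subsetP => y /s_steps [].
apply: cycle_perm_orientations => y; rewrite ?inE -O_t.
- by case/s_steps.
- move=> yO; apply: contraTneq t_size => /card_porbit_invol.
  by rewrite -ltnNge -O_card; move: yO; rewrite -eq_porbit_mem => /eqP ->.
- by rewrite O_moved inE negbK => /eqP.
Qed.

Let moved_rho : moved rho = [set y in t].
Proof. by rewrite moved_cycle_perm // (leq_trans _ t_size). Qed.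

Let sign_rho : C := (-1) ^+ rho * (-1) ^+ size t.

Lemma cycle_gain_cycle_perm phi :
  cycle_gain phi t = perm_gain (A phi) rho (moved rho).
Proof.
rewrite moved_rho (@cycle_gain_perm C n e phi t rho t_uniq) // => y yt.
  by rewrite cycle_permE.
by rewrite cycle_permE (next_cycle t_path).
Qed.

Lemma perm_weight_cycle_perm phi :
  perm_weight (A phi) rho = sign_rho * cycle_gain phi t.
Proof.
by rewrite cycle_gain_cycle_perm /perm_weight moved_rho cardsE (card_uniqP t_uniq).
Qed.

Lemma perm_weight_cycle_permV phi : T_gain e phi ->
  perm_weight (A phi) (rho^-1)%g = sign_rho * (cycle_gain phi t)^-1.
Proof.
move=> gain_phi; rewrite cycle_gain_cycle_perm.
rewrite -perm_gainV //; last exact: mem_moved_perm.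
by rewrite /perm_weight odd_permV movedV moved_rho cardsE (card_uniqP t_uniq).
Qed.

Let t_le_n : (size t <= n)%N.
Proof. by have := max_card (mem t); rewrite card_ord (card_uniqP t_uniq). Qed.

Let card_compl_moved s : #|~: moved s| = (n - #|moved s|)%N.
Proof. by rewrite cardsCs setCK card_ord. Qed.

Let long_rho : ~~ small_porbits (size t) rho.
Proof.
have [x xt] := t_nonempty.
by rewrite negb_forall; apply/existsP; exists x; rewrite card_porbit_cycle_perm // ltnn.
Qed.

Let long_rhoV : ~~ small_porbits (size t) (rho^-1)%g.
Proof.
by apply: contra long_rho => /forallP small_rhoV; apply/forallP => x; rewrite -porbitV.
Qed.

Let rhoV_neq : (rho^-1)%g != rho.
Proof.
have [x xt] := t_nonempty.
apply: contraTneq t_size => rhoV_eq; rewrite -ltnNge ltnS.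
rewrite -(card_porbit_cycle_perm t_uniq xt) card_porbit_invol //.
by rewrite -/rho -{1}rhoV_eq permK.
Qed.

Lemma perm_weight_long_eq0 phi s : ~~ small_porbits (size t) s ->
  #|moved s| = size t -> s != rho -> s != (rho^-1)%g -> perm_weight (A phi) s = 0.
Proof.
move=> long_s moved_card s_neq_rho s_neq_rhoV.
have [e_moved | ] := boolP [forall i in moved s, e i (s i)].
  have := long_perm_cases long_s moved_card (fun i => (forall_inP e_moved) i).
  by case=> s_eq; [move: s_neq_rho | move: s_neq_rhoV]; rewrite s_eq eqxx.
rewrite negb_forall_in => /existsP [i /andP [i_moved nei]].
by rewrite /perm_weight (perm_gain_eq0 _ i_moved nei) mulr0.
Qed.

Lemma coef_long_perm_weight phi : T_gain e phi ->
  (\sum_(s | ~~ small_porbits (size t) s)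
     perm_weight (A phi) s *: 'X^#|~: moved s|)`_(n - size t) =
  sign_rho * (cycle_gain phi t + (cycle_gain phi t)^-1).
Proof.
move=> gain_phi.
rewrite coef_sum (bigD1 rho long_rho) (bigD1 (rho^-1)%g) /=; last first.
  by rewrite long_rhoV rhoV_neq.
rewrite big1 ?addr0 => [|s /andP [/andP [long_s s_neq_rho] s_neq_rhoV]].
  rewrite !coefZ !coefXn movedV card_compl_moved moved_rho cardsE.
  rewrite (card_uniqP t_uniq) eqxx !mulr1 mulrDr.
  by rewrite perm_weight_cycle_perm perm_weight_cycle_permV.
rewrite coefZ coefXn card_compl_moved; case: eqP => [idx_eq | _]; last first.
  by rewrite mulr0.
have moved_card : #|moved s| = size t.
  have := max_card (moved s); rewrite card_ord => /subKn <-.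
  by rewrite -idx_eq (subKn t_le_n).
by rewrite (perm_weight_long_eq0 _ long_s moved_card s_neq_rho s_neq_rhoV) mul0r.
Qed.

Lemma Re_cycle_gain_eq phi1 phi2 : T_gain e phi1 -> T_gain e phi2 ->
  char_poly (A phi1) = char_poly (A phi2) ->
  (forall u, is_cycle e u -> (size u < size t)%N ->
     'Re (cycle_gain phi1 u) = 'Re (cycle_gain phi2 u)) ->
  'Re (cycle_gain phi1 t) = 'Re (cycle_gain phi2 t).
Proof.
move=> gain_phi1 gain_phi2 char_eq shorter_Re.
have sign_neq0 : sign_rho != 0 by rewrite mulf_neq0 ?signr_eq0.
move: (eq_sum_long_perm_weight e_irr e_sym gain_phi1 gain_phi2 shorter_Re char_eq).
move/(congr1 (fun p : {poly C} => p`_(n - size t))).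
rewrite !coef_long_perm_weight // => /(mulfI sign_neq0) eq_sum.
by rewrite !Re_norm1 ?eq_sum // (norm_cycle_gain _ t_path).
Qed.

End LongCycle.

Unset Implicit Arguments.

Theorem theorem3p5 (C : numClosedFieldType) (n : nat) (e : rel 'I_n)
    (phi1 phi2 : 'I_n -> 'I_n -> C) :
  in_Dn e -> T_gain e phi1 -> T_gain e phi2 ->
  (same_spectrum (gain_adj e phi1) (gain_adj e phi2) <->
   (forall s : seq 'I_n, is_cycle e s ->
      'Re (cycle_gain phi1 s) = 'Re (cycle_gain phi2 s))).
Proof.
case=> [[e_irr e_sym] _ eq_cycle_edges] gain_phi1 gain_phi2.
split => [same_spec | all_Re x].
  have char_eq : char_poly (gain_adj e phi1) = char_poly (gain_adj e phi2).
    by apply: eq_monic_mup; rewrite ?char_poly_monic.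
  suff shorter_Re k t : is_cycle e t -> (size t < k)%N ->
      'Re (cycle_gain phi1 t) = 'Re (cycle_gain phi2 t).
    by move=> t t_cycle; apply: (shorter_Re (size t).+1).
  elim: k t => [//|k IHk] t t_cycle.
  rewrite ltnS leq_eqVlt => /orP [/eqP t_size | ]; last exact: IHk.
  apply: (Re_cycle_gain_eq e_irr e_sym eq_cycle_edges t_cycle) => // u u_cycle.
  by rewrite t_size; apply: IHk.
have all_small (s : 'S_n) : small_porbits n.+1 s.
  by apply/forallP => y; rewrite ltnS (leq_trans (max_card _)) ?card_ord.
congr (mup x _); rewrite !char_poly_perm_expansion; try exact: gain_adj_diag.
rewrite -(eq_bigl _ _ all_small) -[RHS](eq_bigl _ _ all_small).
by apply: eq_sum_small_perm_weight => // t t_cycle _; apply: all_Re.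
Qed.
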